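(* Let $Y$ be a strongly connected finite digraph on which a finite abelian group $G$ acts by automorphisms so that the action on $V_Y$ is free, let $H\le G$, $\Gamma=G/H$, $Z=Y_H$, $X=Y_G$, and $F$ an algebraically closed field of characteristic zero. Let $\pi:F[G][u]\to F[\Gamma][u]$ be induced by the projection $G\to\Gamma$. Then $\pi(\gamma_{Y/X}(u))=\gamma_{Z/X}(u)$.
   Context: Digraph $Y=(V_Y,E_Y)$ with incidence $e\mapsto(o(e),t(e))$; strongly connected means a directed path exists between any two distinct vertices. For a group $K$ acting on a digraph $W$ by automorphisms, $W_K$ is the quotient digraph (vertices $K\backslash V_W$, edges $K\backslash E_W$, induced incidence). The group $\Gamma$ acts on $Z=Y_H$ by $(gH)\cdot(H\cdot x)=H\cdot gx$, freely on vertices, with $Z_\Gamma\cong X$. For a finite abelian group $K$ acting on a finite digraph $W$ freely on vertices, $\mathcal{A}_W(w)=\sum_{o(\varepsilon)=w}t(\varepsilon)$ is $\mathbb{Z}[K]$-linear on $\mathbb{Z}V_W$, $\mathbb{Z}V_W[u]$ is free over $\mathbb{Z}[K][u]$, and $\gamma_{W/W_K}(u)=\det_{\mathbb{Z}[K][u]}(\mathcal{I}-\mathcal{A}_Wu)$. Thus $\gamma_{Y/X}$ is taken over $\mathbb{Z}[G][u]$ and $\gamma_{Z/X}$ over $\mathbb{Z}[\Gamma][u]$. *)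

From HB Require Import structures.
From mathcomp Require Import all_boot all_order all_algebra all_fingroup.
Set Implicit Arguments. Unset Strict Implicit. Unset Printing Implicit Defensive.
Import GRing.Theory.
Local Open Scope ring_scope.

Section GrpAlg.
Variables (K : finGroupType) (R : nzRingType).

Definition grpalg : Type := {ffun K -> R}.
HB.instance Definition _ := GRing.Zmodule.on grpalg.

Definition ga_one : grpalg := [ffun g => (g == 1%g)%:R].
Definition ga_mul (a b : grpalg) : grpalg :=
  [ffun g => \sum_(h : K) a h * b (h^-1 * g)%g].

Lemma ga_mulA : associative ga_mul.
Proof.
move=> a b c; apply/ffunP=> g; rewrite !ffunE.
transitivity (\sum_(h : K) \sum_(k : K) a h * (b (h^-1 * k)%g * c (k^-1 * g)%g)).
  apply: eq_bigr => h _; rewrite ffunE big_distrr /=.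
  rewrite (reindex_inj (mulgI (h^-1)%g)) /=; apply: eq_bigr => k _.
  by rewrite invMg invgK -mulgA mulKVg.
rewrite exchange_big /=; apply: eq_bigr => k _; rewrite ffunE big_distrl /=.
by apply: eq_bigr => h _; rewrite mulrA.
Qed.

Lemma ga_mul1r : left_id ga_one ga_mul.
Proof.
move=> a; apply/ffunP=> g; rewrite ffunE (bigD1 1%g) //= ffunE eqxx mul1r invg1 mul1g.
rewrite big1 ?addr0 // => h /negbTE nh; by rewrite ffunE nh mul0r.
Qed.

Lemma ga_mulr1 : right_id ga_one ga_mul.
Proof.
move=> a; apply/ffunP=> g; rewrite ffunE (bigD1 g) //= ffunE mulVg eqxx mulr1.
rewrite big1 ?addr0 // => h nh; rewrite ffunE.
have -> : (h^-1 * g == 1)%g = false.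
  by apply/negbTE; apply: contra nh => /eqP/(canRL (mulKVg h)); rewrite mulg1 => ->.
by rewrite mulr0.
Qed.

Lemma ga_mulDl : left_distributive ga_mul +%R.
Proof.
move=> a b c; apply/ffunP=> g; rewrite !ffunE -big_split /=.
by apply: eq_bigr => h _; rewrite ffunE mulrDl.
Qed.

Lemma ga_mulDr : right_distributive ga_mul +%R.
Proof.
move=> a b c; apply/ffunP=> g; rewrite !ffunE -big_split /=.
by apply: eq_bigr => h _; rewrite ffunE mulrDr.
Qed.

Lemma ga_one_neq0 : ga_one != 0.
Proof.
apply/eqP=> /ffunP/(_ 1%g); rewrite !ffunE eqxx => /eqP; by rewrite oner_eq0.
Qed.

HB.instance Definition _ := GRing.Zmodule_isNzRing.Build grpalg
  ga_mulA ga_mul1r ga_mulr1 ga_mulDl ga_mulDr ga_one_neq0.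

Definition gdelta (k : K) : grpalg := [ffun g => (g == k)%:R].

End GrpAlg.

Definition ga_map (K : finGroupType) (R S : nzRingType) (f : R -> S)
  (a : grpalg K R) : grpalg K S := [ffun g => f (a g)].

Definition ga_proj (gT : finGroupType) (H : {group gT}) (R : nzRingType)
  (a : grpalg gT R) : grpalg (coset_of H) R :=
  [ffun C => \sum_(g : gT | coset H g == C) a g].

(* the finite group K on the vertices.  The free R[K][u]-basis of       *)
(* R V_W[u] is given by one chosen representative r_i of each K-orbit  *)
(* of vertices; A_W r_i = sum_{o(e) = r_i} t(e) = sum_j M_ij . r_j,     *)
(* where t(e) = k_e . r_j contributes [k_e] to M_ij.                   *)
Section Gamma.
Variables (K : finGroupType) (R : nzRingType) (W Ed : finType).
Variables (VW : {set W}) (EW : {set Ed}) (o t : Ed -> W) (act : W -> K -> W).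

Definition vclasses : {set {set W}} := [set [set act w k | k : K] | w in VW].

Definition vclass (i : 'I_#|vclasses|) : {set W} := enum_val i.

Definition vrep (i : 'I_#|vclasses|) : option W := [pick x in vclass i].

Definition kof (e : Ed) (j : 'I_#|vclasses|) : K :=
  odflt 1%g [pick k : K | omap (act^~ k) (vrep j) == Some (t e)].

Definition adj_mx : 'M[grpalg K R]_#|vclasses| :=
  \matrix_(i, j) \sum_(e in EW | (vrep i == Some (o e)) && (t e \in vclass j))
                    gdelta R (kof e j).

Definition gamma : {poly grpalg K R} :=
  \det (\matrix_(i, j) ((i == j)%:R%:P - (adj_mx i j)%:P * 'X)).

End Gamma.

Definition strongly_connected (V E : finType) (o t : E -> V) : Prop :=
  forall x y : V, x != y ->
    connect (fun a b => [exists e, (o e == a) && (t e == b)]) x y.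

Definition qverts (gT : finGroupType) (H : {set gT}) (V : finType)
  (toV : {action gT &-> V}) : {set {set V}} :=
  [set [set toV x h | h in H] | x : V].

Definition qedges (gT : finGroupType) (H : {set gT}) (E : finType)
  (toE : {action gT &-> E}) : {set {set E}} :=
  [set [set toE e h | h in H] | e : E].

Definition qinc (V E : finType) (f : E -> V) (O : {set E}) : {set V} :=
  [set f e | e in O].

Definition qact_orb (gT : finGroupType) (H : {group gT}) (V : finType)
  (toV : {action gT &-> V}) (O : {set V}) (C : coset_of H) : {set V} :=
  [set toV x g | x in O, g in (C : {set gT})].

(** Choosing one vertex in each G-orbit of Y turns the adjacency operator of Y
    into a matrix over Z[G] indexed by the G-orbits, with entry [g] for each edge
    from the i-th representative to the g-translate of the j-th one.  The
    Gamma-orbits of Z = Y_H correspond to the G-orbits of Y, and the chosen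
    representatives of Z are the H-orbits of translates [r_i g_i] of those of Y.
    Hence projecting the matrix of Y to Z[Gamma] gives the matrix of Z, reindexed
    and conjugated by the diagonal matrix of units [g_i H]; neither operation
    changes det(I - A u).  The identity holds over int already, and extension of
    scalars to F commutes with the projection. *)

From HB Require Import structures.
From mathcomp Require Import all_boot all_order all_algebra all_fingroup all_field.
From mathcomp Require Import ring.
Set Implicit Arguments. Unset Strict Implicit. Unset Printing Implicit Defensive.
Import GRing.Theory.
Local Open Scope ring_scope.

Lemma ga_mulE (K : finGroupType) (R : nzRingType) (a b : grpalg K R) g :
  (a * b) g = \sum_h a h * b (h^-1 * g)%g.
Proof. by rewrite ffunE. Qed.

Lemma gdeltaM (K : finGroupType) (R : nzRingType) (a b : K) :
  gdelta R a * gdelta R b = gdelta R (a * b)%g.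
Proof.
apply/ffunP=> g; rewrite ga_mulE ffunE (bigD1 a) //= big1 ?addr0.
  by rewrite !ffunE eqxx mul1r (can2_eq (mulKVg a) (mulKg a)).
by move=> h /negbTE nh; rewrite ffunE nh mul0r.
Qed.

Section GroupRingProjection.
Variables (gT : finGroupType) (H : {group gT}) (R : nzRingType).
Hypothesis nH : ([set: gT] \subset 'N(H))%g.

Lemma ga_proj_delta k : ga_proj H (gdelta R k) = gdelta R (coset H k).
Proof.
apply/ffunP=> C; rewrite !ffunE big_mkcond (bigD1 k) //= big1 ?addr0.
  by rewrite ffunE eqxx eq_sym; case: eqP.
by move=> g /negbTE ng; rewrite ffunE ng; case: ifP.
Qed.

(* The unused argument carries the normality of [H], under which [ga_proj] is
   multiplicative, so that the ring morphism instance below can be declared. *)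
Definition ga_projm of ([set: gT] \subset 'N(H))%g := @ga_proj gT H R.

Lemma ga_projm_is_zmod_morphism : zmod_morphism (ga_projm nH).
Proof.
move=> a b; apply/ffunP=> C; rewrite !ffunE -sumrB.
by apply: eq_bigr => g _; rewrite !ffunE.
Qed.
HB.instance Definition _ := GRing.isZmodMorphism.Build _ _ (ga_projm nH)
  ga_projm_is_zmod_morphism.

Lemma ga_projm_is_monoid_morphism : monoid_morphism (ga_projm nH).
Proof.
have cosetM x y : coset H (x * y)%g = (coset H x * coset H y)%g.
  by rewrite morphM // (subsetP nH) ?inE.
split=> [|a b]; first by rewrite /ga_projm ga_proj_delta morph1.
apply/ffunP=> C; rewrite !ffunE.
transitivity (\sum_h a h * \sum_(k | coset H k == ((coset H h)^-1 * C)%g) b k).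
  under eq_bigr do rewrite ga_mulE.
  rewrite exchange_big /=; apply: eq_bigr => h _.
  rewrite big_distrr (reindex_inj (mulgI h)) /=.
  apply: eq_big => [k|k _]; last by rewrite mulKg.
  by rewrite cosetM -(can2_eq (mulKg _) (mulKVg _)).
rewrite (partition_big (coset H) xpredT) //=.
by apply: eq_bigr => D _; rewrite !ffunE big_distrl; apply: eq_bigr => h /eqP <-.
Qed.
HB.instance Definition _ := GRing.isMonoidMorphism.Build _ _ (ga_projm nH)
  ga_projm_is_monoid_morphism.

End GroupRingProjection.

Lemma ga_proj_map (gT : finGroupType) (H : {group gT}) (R S : nzRingType)
    (f : {additive R -> S}) (a : grpalg gT R) :
  ga_proj H (ga_map f a) = ga_map f (ga_proj H a).
Proof.
apply/ffunP=> C; rewrite !ffunE raddf_sum.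
by apply: eq_bigr => g _; rewrite ffunE.
Qed.

Lemma map_poly_ga_proj_map (gT : finGroupType) (H : {group gT}) (R S : nzRingType)
    (f : {additive R -> S}) (p : {poly grpalg gT R}) :
  map_poly (@ga_proj _ H S) (map_poly (ga_map f) p)
  = map_poly (ga_map f) (map_poly (@ga_proj _ H R) p).
Proof.
have proj0 (T : nzRingType) : @ga_proj _ H T 0 = 0.
  by apply/ffunP=> C; rewrite !ffunE big1 // => g _; rewrite ffunE.
have map0 (K : finGroupType) : ga_map f (0 : grpalg K R) = 0.
  by apply/ffunP=> g; rewrite !ffunE raddf0.
by apply/polyP=> n; rewrite !coef_map_id0 ?proj0 ?map0 // ga_proj_map.
Qed.

Section CommutativeGroupRing.
Variables (K : finGroupType) (R : comNzRingType).

(* As for [ga_projm], the argument makes the instance conditional. *)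
Definition ga_com of abelian [set: K] : Type := grpalg K R.

Variable cK : abelian [set: K].
HB.instance Definition _ := GRing.NzRing.on (ga_com cK).

Lemma ga_com_mulC : @commutative (ga_com cK) _ *%R.
Proof.
move=> a b; apply/ffunP=> g; rewrite !ffunE.
rewrite (reindex_inj (inj_comp (mulgI g) (@invg_inj K))) /=.
apply: eq_bigr => h _; rewrite mulrC invMg invgK mulgKV.
by have /centsP cKK := cK; rewrite (cKK g) ?inE.
Qed.
HB.instance Definition _ := GRing.PzRing_hasCommutativeMul.Build (ga_com cK)
  ga_com_mulC.

End CommutativeGroupRing.

Lemma det_monomial_conj (R : comNzRingType) n m (A : 'M[R]_n) (B : 'M[R]_m)
    (f : 'I_n -> 'I_m) (d e : 'I_n -> R) :
    bijective f -> (forall i, d i * e i = 1) ->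
  (forall i j, A i j = d i * B (f i) (f j) * e j) -> \det A = \det B.
Proof.
move=> f_bij de_1 defA; have := bij_eq_card f_bij; rewrite !card_ord => eq_nm.
subst m; pose s := perm (bij_inj f_bij).
have -> : A = diag_mx (\row_i d i) *m (perm_mx s *m B *m (perm_mx s)^T)
              *m diag_mx (\row_i e i).
  apply/matrixP => i j; rewrite -row_permE tr_perm_mx -col_permE.
  by rewrite mul_mx_diag mul_diag_mx !mxE !permE defA.
have sign2 : (-1) ^+ s * (-1) ^+ s = 1 :> R by rewrite -signr_addb addbb.
have de : \prod_i (\row_i d i) 0 i * \prod_i (\row_i e i) 0 i = 1.
  by rewrite -big_split big1 // => i _; rewrite !mxE; apply: de_1.
rewrite !det_mulmx !det_diag det_perm det_tr det_perm.
move: sign2 de; move: ((-1) ^+ s) (\prod_i _) (\prod_i _) => x a b xx ab.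
by transitivity (\det B * (x * x) * (b * a)); [ring | rewrite xx ab !mulr1].
Qed.

Section OrbitRepresentatives.
Variables (K : finGroupType) (W Ed : finType) (VW : {set W}) (t : Ed -> W).
(* [act] need only act on [VW]: for Y_H, [qact_orb] is an action on H-orbits
   but not on arbitrary sets of vertices. *)
Variable act : W -> K -> W.
Hypothesis act_in : forall w k, w \in VW -> act w k \in VW.
Hypothesis act1 : forall w, w \in VW -> act w 1%g = w.
Hypothesis actM : forall w a b, w \in VW -> act (act w a) b = act w (a * b)%g.

Local Notation orb w := [set act w k | k : K].
Local Notation classes := (vclasses VW act).

Lemma orb_refl w : w \in VW -> w \in orb w.
Proof. by move=> Vw; apply/imsetP; exists 1%g; rewrite ?act1. Qed.

Lemma orb_act w a : w \in VW -> orb (act w a) = orb w.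
Proof.
move=> Vw; apply/setP=> y; apply/imsetP/imsetP => -[k _ ->].
  by exists (a * k)%g; rewrite ?actM.
by exists (a^-1 * k)%g; rewrite ?actM ?mulKVg.
Qed.

Lemma orb_transl w y : w \in VW -> y \in orb w -> orb y = orb w.
Proof. by move=> Vw /imsetP[k _ ->]; rewrite orb_act. Qed.

Lemma orb_eq_mem w y : w \in VW -> y \in VW -> (orb w == orb y) = (w \in orb y).
Proof.
by move=> Vw Vy; apply/eqP/idP => [<-|]; [apply: orb_refl | apply: orb_transl].
Qed.

Lemma orb_actr w y a :
  w \in VW -> y \in VW -> (act y a \in orb w) = (y \in orb w).
Proof. by move=> Vw Vy; rewrite -!orb_eq_mem ?act_in ?orb_act. Qed.

Lemma orb_in_classes w : w \in VW -> orb w \in classes.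
Proof. by move=> Vw; apply/imsetP; exists w. Qed.

Lemma vrep_some (i : 'I_#|classes|) : exists r, vrep i == Some r.
Proof.
have [w Vw eqi] := imsetP (enum_valP i).
rewrite /vrep; case: pickP => [r _ | none]; first by exists r.
by have := none w; rewrite /vclass eqi orb_refl.
Qed.

Lemma vrep_spec (i : 'I_#|classes|) r : vrep i = Some r ->
  r \in VW /\ vclass i = orb r.
Proof.
rewrite /vrep; case: pickP => // r' r'i [<-].
have [w Vw eqi] := imsetP (enum_valP i); move: r'i; rewrite /vclass eqi => r'w.
have [k _ ->] := imsetP r'w; split; first exact: act_in.
by rewrite orb_act.
Qed.

Lemma kofP e (j : 'I_#|classes|) r k : vrep j = Some r ->
  injective (act r) -> act r k = t e -> kof t e j = k.
Proof.
move=> rj r_inj ek; apply: r_inj; rewrite ek /kof rj.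
case: pickP => [k' /eqP[] // | /(_ k)]; by rewrite /= ek eqxx.
Qed.

End OrbitRepresentatives.

Definition char_mx (K : finGroupType) (R : nzRingType) (W Ed : finType)
    (VW : {set W}) (EW : {set Ed}) (o t : Ed -> W) (act : W -> K -> W) :
    'M[{poly grpalg K R}]_#|vclasses VW act| :=
  \matrix_(i, j) ((i == j)%:R%:P - (adj_mx R VW EW o t act i j)%:P * 'X).

Section QuotientDigraph.
Variables (gT : finGroupType) (V E : finType) (o t : E -> V).
Variables (toV : {action gT &-> V}) (toE : {action gT &-> E}) (H : {group gT}).
Hypothesis cG : abelian [set: gT].
Hypothesis o_act : forall e g, o (toE e g) = toV (o e) g.
Hypothesis t_act : forall e g, t (toE e g) = toV (t e) g.
Hypothesis freeV : forall x g, toV x g = x -> g = 1%g.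

Local Notation orbH := (orbit toV H).
Local Notation orbE := (orbit toE H).
Local Notation orbG x := [set toV x k | k : gT].
Local Notation qact := (@qact_orb gT H V toV).
Local Notation orbZ O := [set qact O C | C : coset_of H].

Let commG (x y : gT) : (x * y = y * x)%g.
Proof. by have /centsP cGG := cG; apply: cGG; rewrite inE. Qed.

Let Yact_in w k : w \in [set: V] -> toV w k \in [set: V].
Proof. by rewrite !inE. Qed.
Let Yact1 w : w \in [set: V] -> toV w 1%g = w.
Proof. by rewrite act1. Qed.
Let YactM w a b : w \in [set: V] -> toV (toV w a) b = toV w (a * b)%g.
Proof. by rewrite actM. Qed.

Lemma normT : ([set: gT] \subset 'N(H))%g.
Proof. exact: sub_abelian_norm. Qed.

Let normH g : g \in 'N(H)%g.
Proof. by rewrite (subsetP normT) ?inE. Qed.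

Lemma abelian_quotientT : abelian [set: coset_of H].
Proof. by rewrite -quotientT quotient_abelian. Qed.

Lemma free_act_inj x : injective (toV x).
Proof.
move=> a b eq_ab; apply/eqP; rewrite eq_mulVg1; apply/eqP/(freeV (x := toV x a)).
by rewrite -actM mulKVg eq_ab.
Qed.

Lemma qinc_orbit (f : E -> V) e :
  (forall e g, f (toE e g) = toV (f e) g) -> qinc f (orbE e) = orbH (f e).
Proof. by move=> f_act; rewrite /qinc -imset_comp; apply: eq_imset => h /=. Qed.

Lemma orbit_coset x a b :
  (orbH (toV x a) == orbH (toV x b)) = (coset H a == coset H b).
Proof.
rewrite orbit_eq_mem; apply/orbitP/eqP => [[h hH]|].
  by rewrite -actM => /free_act_inj <-; rewrite coset_kerr.
case/(kercoset_rcoset (normH a) (normH b)) => h hH ->.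
by exists h; rewrite // -actM commG.
Qed.

Lemma qact_orbit x g : qact (orbH x) (coset H g) = orbH (toV x g).
Proof.
rewrite /qact_orb val_coset //; apply/setP=> y; apply/imset2P/imsetP.
  case=> z c /imsetP[h hH ->] /rcosetP[h' h'H ->] ->.
  by exists (h * h')%g; rewrite ?groupM // -!actM mulgA commG.
case=> h hH ->; exists x (h * g)%g; rewrite ?orbit_refl //.
  by apply/rcosetP; exists h.
by rewrite -!actM commG.
Qed.

Lemma qact_orbit_repr x C : qact (orbH x) C = orbH (toV x (repr C)).
Proof. by rewrite -qact_orbit coset_reprK. Qed.

Lemma qact_orbit_inj x : injective (qact (orbH x)).
Proof.
move=> C D; rewrite !qact_orbit_repr => /eqP.
by rewrite orbit_coset !coset_reprK => /eqP.
Qed.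

Lemma orbit_in_qverts x : orbH x \in qverts H toV.
Proof. exact: imset_f. Qed.

Lemma qact_in O C : O \in qverts H toV -> qact O C \in qverts H toV.
Proof. by case/imsetP=> x _ ->; rewrite qact_orbit_repr orbit_in_qverts. Qed.

Lemma qact1 O : O \in qverts H toV -> qact O 1%g = O.
Proof.
by case/imsetP=> x _ ->; rewrite -(morph1 (coset_morphism H)) qact_orbit act1.
Qed.

Lemma qactM O C D : O \in qverts H toV ->
  qact (qact O C) D = qact O (C * D)%g.
Proof.
case/imsetP=> x _ ->; rewrite -[C]coset_reprK -[D]coset_reprK.
by rewrite !qact_orbit -morphM // qact_orbit actM.
Qed.

Lemma mem_orbZ x y : (orbH y \in orbZ (orbH x)) = (y \in orbG x).
Proof.
apply/imsetP/imsetP => [[C _]|[g _ ->]]; last first.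
  by exists (coset H g); rewrite ?qact_orbit.
rewrite qact_orbit_repr => /eqP; rewrite orbit_eq_mem => /orbitP[h _ <-].
by exists (repr C * h)%g; rewrite ?actM.
Qed.

Lemma orbZ_eq x y : (orbZ (orbH x) == orbZ (orbH y)) = (orbG x == orbG y).
Proof.
rewrite (orb_eq_mem qact1 qactM) ?orbit_in_qverts // mem_orbZ.
by rewrite (orb_eq_mem Yact1 YactM) ?inE.
Qed.

Lemma sum_qedges_out (M : nmodType) x (F : {set E} -> M) :
  \sum_(Oe in qedges H toE | qinc o Oe == orbH x) F Oe
    = \sum_(e | o e == x) F (orbE e).
Proof.
rewrite (eq_bigl [in orbE @: [set e | o e == x]]) => [|Oe]; last first.
  apply/andP/imsetP => [[/imsetP[e _ ->]]|[e]].
    rewrite qinc_orbit // orbit_eq_mem => /orbitP[h hH oe].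
    exists (toE e h^-1%g); last by rewrite orbit_act ?groupV.
    by rewrite inE o_act -oe actK.
  by rewrite inE => /eqP oe ->; rewrite imset_f ?qinc_orbit ?oe.
rewrite big_imset => [|e1 e2]; first by apply: eq_bigl => e; rewrite inE.
rewrite !inE => /eqP o1 /eqP o2 /eqP; rewrite orbit_eq_mem => /orbitP[h _ e21].
move: o1; rewrite -e21 o_act o2 => /freeV h1.
by rewrite h1 act1.
Qed.

Local Notation actY := (fun (x : V) (g : gT) => toV x g).
Local Notation actZ := (fun (O : {set V}) (C : coset_of H) => qact_orb toV O C).
Local Notation clY := (vclasses [set: V] actY).
Local Notation clZ := (vclasses (qverts H toV) actZ).

Definition repY (i : 'I_#|clY|) : V := xchoose (vrep_some Yact1 i).

Lemma repY_spec i : vrep i = Some (repY i) /\ vclass i = orbG (repY i).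
Proof.
have /eqP ri := xchooseP (vrep_some Yact1 i).
by split; last exact: (vrep_spec Yact_in YactM ri).2.
Qed.

Lemma repZ_some (j : 'I_#|clZ|) : exists z, vrep j == Some (orbH z).
Proof.
have [O /eqP Oj] := vrep_some qact1 j.
have [/imsetP[z _ eO] _] := vrep_spec qact_in qactM Oj.
by exists z; rewrite Oj eO.
Qed.

Definition repZ (j : 'I_#|clZ|) : V := xchoose (repZ_some j).

Lemma repZ_spec j :
  vrep j = Some (orbH (repZ j)) /\ vclass j = orbZ (orbH (repZ j)).
Proof.
have /eqP zj := xchooseP (repZ_some j).
by split; last exact: (vrep_spec qact_in qactM zj).2.
Qed.

Definition fYZ (i : 'I_#|clY|) : 'I_#|clZ| :=
  enum_rank_in (orb_in_classes actZ (orbit_in_qverts (repY i)))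
    (orbZ (orbH (repY i))).

Definition fZY (j : 'I_#|clZ|) : 'I_#|clY| :=
  enum_rank_in (orb_in_classes actY (in_setT (repZ j))) (orbG (repZ j)).

Lemma vclass_fYZ i : vclass (fYZ i) = orbZ (orbH (repY i)).
Proof. by rewrite /vclass enum_rankK_in // orb_in_classes ?orbit_in_qverts. Qed.

Lemma vclass_fZY j : vclass (fZY j) = orbG (repZ j).
Proof. by rewrite /vclass enum_rankK_in // orb_in_classes ?inE. Qed.

Lemma fYZ_bij : bijective fYZ.
Proof.
exists fZY => [i|j]; apply: enum_val_inj.
  change (vclass (fZY (fYZ i)) = vclass i); rewrite vclass_fZY (repY_spec i).2.
  by apply/eqP; rewrite -orbZ_eq -(repZ_spec _).2 vclass_fYZ.
change (vclass (fYZ (fZY j)) = vclass j); rewrite vclass_fYZ (repZ_spec j).2.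
by apply/eqP; rewrite orbZ_eq -(repY_spec _).2 vclass_fZY.
Qed.

(* The representative of the Z-class [fYZ i] is the H-orbit of a G-translate
   of [repY i]; these translates are the diagonal units conjugating the two
   adjacency matrices. *)
Lemma twist_some i : exists g, repZ (fYZ i) == toV (repY i) g.
Proof.
have : orbH (repZ (fYZ i)) \in vclass (fYZ i).
  by rewrite (repZ_spec _).2 (orb_refl qact1) ?orbit_in_qverts.
by rewrite vclass_fYZ mem_orbZ => /imsetP[g _ ->]; exists g.
Qed.

Definition twist (i : 'I_#|clY|) : gT := xchoose (twist_some i).

Lemma twist_spec i : repZ (fYZ i) = toV (repY i) (twist i).
Proof. exact/eqP/(xchooseP (twist_some i)). Qed.

Lemma kofY e j k : toV (repY j) k = t e -> kof t e j = k.
Proof. exact: kofP (repY_spec j).1 (@free_act_inj _). Qed.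

Lemma kofZ e j k g : toV (repY j) k = t e ->
  kof (qinc t) (orbE (toE e g)) (fYZ j) = coset H (k * g * (twist j)^-1)%g.
Proof.
move=> ek; apply: kofP (repZ_spec _).1 (@qact_orbit_inj _) _.
rewrite twist_spec qact_orbit qinc_orbit // t_act -ek -!actM.
by rewrite commG mulgKV.
Qed.

Lemma adjY_E (R : nzRingType) i j :
  adj_mx R [set: V] [set: E] o t actY i j =
  \sum_(e | o e == repY i)
    (if t e \in orbG (repY j) then gdelta R (kof t e j) else 0).
Proof.
rewrite mxE (repY_spec i).1 (repY_spec j).2 -big_mkcondr; apply: eq_bigl => e.
by rewrite inE (inj_eq Some_inj) eq_sym.
Qed.

Lemma adjZ_E (R : nzRingType) i j :
  adj_mx R (qverts H toV) (qedges H toE) (qinc o) (qinc t) actZ (fYZ i) (fYZ j) =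
  \sum_(e | o e == repY i) (if t e \in orbG (repY j)
     then gdelta R (kof (qinc t) (orbE (toE e (twist i))) (fYZ j)) else 0).
Proof.
rewrite mxE (repZ_spec _).1 twist_spec.
under eq_bigl do rewrite andbA; rewrite big_mkcondr /=.
under eq_bigl do rewrite (inj_eq Some_inj) eq_sym.
rewrite sum_qedges_out (reindex_inj (act_inj toE (twist i))) /=.
apply: eq_big => [e|e _]; first by rewrite o_act (inj_eq (act_inj toV _)).
rewrite qinc_orbit // t_act vclass_fYZ mem_orbZ.
by rewrite (orb_actr Yact_in Yact1 YactM) ?inE.
Qed.

Lemma ga_proj_adj_mx (R : nzRingType) i j :
  @ga_projm _ H R normT (adj_mx R [set: V] [set: E] o t actY i j) =
  gdelta R (coset H (twist i))^-1%g
  * adj_mx R (qverts H toV) (qedges H toE) (qinc o) (qinc t) actZ (fYZ i) (fYZ j)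
  * gdelta R (coset H (twist j)).
Proof.
rewrite adjY_E adjZ_E rmorph_sum mulr_sumr mulr_suml; apply: eq_bigr => e _.
case: ifP => [/imsetP[k _ ek] | _]; last by rewrite rmorph0 mulr0 mul0r.
rewrite (kofY (esym ek)) (kofZ _ (esym ek)).
rewrite [LHS]/= /ga_projm ga_proj_delta !gdeltaM.
rewrite -morphV // -!morphM //; congr (gdelta R (coset H _)).
by rewrite mulgA mulgKV [(k * _)%g]commG mulKg.
Qed.

Lemma ga_proj_char_mx (R : nzRingType) i j :
  map_mx (map_poly (@ga_projm _ H R normT))
    (char_mx R [set: V] [set: E] o t actY) i j =
  (gdelta R (coset H (twist i))^-1%g)%:P
  * char_mx R (qverts H toV) (qedges H toE) (qinc o) (qinc t) actZ (fYZ i) (fYZ j)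
  * (gdelta R (coset H (twist j)))%:P.
Proof.
rewrite !mxE rmorphB rmorphM /= !map_polyC map_polyX /= rmorph_nat.
rewrite (inj_eq (bij_inj fYZ_bij)) mulrBr mulrBl; congr (_ - _).
  case: (eqVneq i j) => [<-|_]; last by rewrite polyC0 mulr0 mul0r.
  by rewrite polyC1 mulr1 -polyCM gdeltaM mulVg.
rewrite mulrA -(mulrA _ (polyX _)) -commr_polyX mulrA -!polyCM; congr (_%:P * _).
by have := ga_proj_adj_mx R i j; rewrite !mxE.
Qed.

Lemma ga_proj_gamma (R : comNzRingType) :
  map_poly (@ga_proj _ H R) (gamma R [set: V] [set: E] o t actY)
  = gamma R (qverts H toV) (qedges H toE) (qinc o) (qinc t) actZ.
Proof.
rewrite -[@ga_proj _ H R]/(@ga_projm _ H R normT) /gamma -det_map_mx.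
apply: (@det_monomial_conj {poly ga_com R abelian_quotientT} _ _ _ _ fYZ
  (fun i => (gdelta R (coset H (twist i))^-1%g)%:P)
  (fun i => (gdelta R (coset H (twist i)))%:P)).
- exact: fYZ_bij.
- by move=> i; rewrite -polyCM gdeltaM mulVg.
- exact: ga_proj_char_mx.
Qed.

End QuotientDigraph.

Theorem theorem3p6 (gT : finGroupType) (V E : finType) (o t : E -> V)
  (toV : {action gT &-> V}) (toE : {action gT &-> E})
  (H : {group gT}) (F : closedFieldType) :
  abelian [set: gT] ->
  strongly_connected o t ->
  (forall (e : E) (g : gT), o (toE e g) = toV (o e) g) ->
  (forall (e : E) (g : gT), t (toE e g) = toV (t e) g) ->
  (forall (x : V) (g : gT), toV x g = x -> g = 1%g) ->
  [pchar F] =i pred0 ->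
  map_poly (@ga_proj gT H F)
    (map_poly (ga_map (fun z : int => z%:~R : F))
       (gamma int [set: V] [set: E] o t (fun (x : V) (g : gT) => toV x g)))
  = map_poly (ga_map (fun z : int => z%:~R : F))
      (gamma int (qverts H toV) (qedges H toE) (qinc o) (qinc t) (fun (O : {set V}) (C : coset_of H) => qact_orb toV O C)).
Proof.
move=> cG _ o_act t_act freeV _.
rewrite (map_poly_ga_proj_map H (@intmul F 1 : {additive int -> F})).
by rewrite (ga_proj_gamma (toE := toE)).
Qed.
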